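(* The continued fraction \[ 80-\cfrac{64}{17+\cfrac{3^4}{32+\cfrac{5^4}{48+\cfrac{7^4}{64+\cdots}}}}, \] i.e. with $a(0)=80$, $a(1)=17$, $a(n)=16n$ for $n\ge2$, $b(0)=-64$, $b(n)=(2n+1)^4$ for $n\ge1$, converges to $\left(\Gamma(1/4)/\Gamma(3/4)\right)^4$.
   Context: The value of the continued fraction with partial denominators $a(n)$ and partial numerators $b(n)$ is $a(0)+\cfrac{b(0)}{a(1)+\cfrac{b(1)}{a(2)+\cdots}}$. *)

From Stdlib Require Import Reals.
From Coquelicot Require Import Coquelicot.
Open Scope R_scope.

Fixpoint cf_tail (a b : nat -> R) (k m : nat) : R :=
  match m with
  | O => a k
  | S m' => a k + b k / cf_tail a b (S k) m'
  end.

(* n-th approximant: a(0) + b(0)/(a(1) + ... + b(n-1)/a(n)) *)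
Definition cf_approx (a b : nat -> R) (n : nat) : R := cf_tail a b 0 n.

Definition cf_converges_to (a b : nat -> R) (l : R) : Prop :=
  is_lim_seq (cf_approx a b) l.

Definition Gamma (x : R) : R :=
  RInt_gen (fun t => Rpower t (x - 1) * exp (- t)) (at_right 0) (Rbar_locally p_infty).

Definition cf_a (n : nat) : R :=
  match n with
  | O => 80
  | 1%nat => 17
  | _ => 16 * INR n
  end.

Definition cf_b (n : nat) : R :=
  match n with
  | O => -64
  | _ => (2 * INR n + 1) ^ 4
  end.

(* The approximants are quotients of two solutions of the three-term recurrence
   u(n+2) = a(n+1) u(n+1) + b(n) u(n), and these have closed forms: up to a factor 16 and a
   quadratic polynomial, they are fourth powers of 3*7*...*(4k-1) = 4^k (3/4)_k and
   1*5*...*(4k-3) = 4^k (1/4)_k.  Since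
   Gamma(x+m) = Gamma(x) (x)_m, each approximant is rho^4 = (Gamma(1/4)/Gamma(3/4))^4 times a
   rational function of m and of r_m = Gamma(m+3/4)/Gamma(m+1/4).  The log-convexity bound
   Gamma(x+1/2)^2 <= x Gamma(x)^2, used at x = m+1/4 and x = m+3/4, traps r_m^2 between
   (m+1/4)^2/(m+3/4) and m+1/4, which puts the n-th approximant within 4 rho^4/(n+1) of rho^4. *)

From Stdlib Require Import Reals Lra Lia.
From Coquelicot Require Import Coquelicot.
Open Scope R_scope.

Lemma ball_of_Rabs (y e x : R) : Rabs (x - y) < e -> ball y e x.
Proof. intros H; exact H. Qed.

Lemma Rabs_of_ball (y e x : R) : ball y e x -> Rabs (x - y) < e.
Proof. intros H; exact H. Qed.

Lemma nat_above (x : R) : exists n : nat, x <= INR n.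
Proof.
  destruct (INR_unbounded (Rmax x 0)) as [n Hn].
  exists n. pose proof (Rmax_l x 0). lra.
Qed.

Lemma is_lim_seq_of_error_le (u : nat -> R) (l C : R) :
  (forall n, Rabs (u n - l) <= C / (INR n + 1)) -> is_lim_seq u l.
Proof.
  intros Hu; apply is_lim_seq_spec; intros eps.
  destruct (nat_above (C / eps)) as [N HN]; exists N; intros n Hn.
  apply Rle_lt_trans with (1 := Hu n).
  apply le_INR in Hn; pose proof (cond_pos eps) as He; pose proof (pos_INR n).
  apply Rmult_lt_reg_r with ((INR n + 1) / eps); [apply Rdiv_lt_0_compat; lra |].
  replace (C / (INR n + 1) * ((INR n + 1) / eps)) with (C / eps) by (field; lra).
  replace (eps * ((INR n + 1) / eps)) with (INR n + 1) by (field; lra).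
  lra.
Qed.

Lemma Rabs_div_sub_1_le (p q e : R) : 0 < q -> Rabs (p - q) <= e * q -> Rabs (p / q - 1) <= e.
Proof.
  intros Hq H.
  replace (p / q - 1) with ((p - q) / q) by (field; lra).
  unfold Rdiv; rewrite Rabs_mult, Rabs_inv, (Rabs_pos_eq q) by lra.
  apply Rmult_le_reg_r with q; [exact Hq |].
  rewrite Rmult_assoc, Rinv_l, Rmult_1_r by lra; exact H.
Qed.

Lemma filterlim_0_le {F} {FF : Filter F} (f g : R -> R) :
  F (fun t => 0 <= f t <= g t) -> filterlim g F (locally 0) -> filterlim f F (locally 0).
Proof.
  intros Hfg Hg. apply filterlim_locally; intros eps.
  generalize (filter_and _ _ Hfg (proj1 (filterlim_locally g 0) Hg eps)).
  apply filter_imp; intros t [Ht Hgt]; apply ball_of_Rabs.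
  apply Rabs_of_ball in Hgt; rewrite Rminus_0_r, Rabs_pos_eq in * by lra; lra.
Qed.

Lemma Rpower_gt_0 (t y : R) : 0 < Rpower t y.
Proof. apply exp_pos. Qed.

Lemma is_derive_Rpower (t y : R) : 0 < t -> is_derive (fun s => Rpower s y) t (y * Rpower t (y - 1)).
Proof. intros Ht; now apply is_derive_Reals, derivable_pt_lim_power. Qed.

Lemma filterlim_Rpower_0_right (x : R) : 0 < x ->
  filterlim (fun t => Rpower t x) (at_right 0) (locally 0).
Proof.
  intros Hx; apply filterlim_locally; intros eps.
  exists (mkposreal _ (Rpower_gt_0 eps (/ x))); intros t Ht Ht0; apply ball_of_Rabs.
  apply Rabs_of_ball, Rabs_lt_between in Ht; simpl in Ht.
  assert (Heps : Rpower (Rpower eps (/ x)) x = eps).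
  { rewrite Rpower_mult, Rinv_l, Rpower_1 by (try apply cond_pos; lra); reflexivity. }
  pose proof (Rlt_Rpower_l t (Rpower eps (/ x)) x Hx ltac:(lra)).
  pose proof (Rpower_gt_0 t x).
  rewrite Rminus_0_r, Rabs_pos_eq; lra.
Qed.

Lemma filterlim_div_pinfty (C : R) : filterlim (fun t => C / t) (Rbar_locally p_infty) (locally 0).
Proof.
  apply filterlim_locally; intros eps; pose proof (cond_pos eps) as He.
  exists (Rabs C / eps); intros t Ht.
  assert (Ht0 : 0 < t) by (apply Rle_lt_trans with (2 := Ht), Rdiv_le_0_compat; [apply Rabs_pos | lra]).
  apply Rlt_div_l in Ht; [| lra].
  apply ball_of_Rabs; rewrite Rminus_0_r, Rabs_div, (Rabs_pos_eq t) by lra.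
  apply Rlt_div_l; lra.
Qed.

Lemma increasing_bounded_cvg_pinfty (g : R -> R) (B : R) :
  (forall a b, 1 <= a <= b -> g a <= g b) -> (forall a, 1 <= a -> g a <= B) ->
  exists L, filterlim g (Rbar_locally p_infty) (locally L) /\ (forall a, 1 <= a -> g a <= L).
Proof.
  intros Hmono Hbound.
  set (E := fun y => exists a, 1 <= a /\ y = g a).
  assert (HE : bound E) by (exists B; intros y [a [Ha ->]]; auto).
  assert (HE1 : exists y, E y) by (exists (g 1), 1; split; [lra | reflexivity]).
  destruct (completeness E HE HE1) as [L [HLub HLleast]].
  assert (Hle : forall a, 1 <= a -> g a <= L) by (intros a Ha; apply HLub; now exists a).
  exists L; split; [| exact Hle].
  apply filterlim_locally; intros eps.
  assert (Hclose : exists a0, 1 <= a0 /\ L - eps < g a0).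
  { apply Classical_Prop.NNPP; intros Hnone.
    enough (L <= L - eps) by (destruct eps; simpl in *; lra).
    apply HLleast; intros y [a [Ha ->]].
    apply Rnot_lt_le; intros Hlt; apply Hnone; now exists a. }
  destruct Hclose as [a0 [Ha0 Hga0]].
  exists a0; intros a Ha; apply ball_of_Rabs.
  pose proof (Hmono a0 a ltac:(lra)); pose proof (Hle a ltac:(lra)).
  apply Rabs_lt_between; lra.
Qed.

Lemma RInt_le_antiderivative (f g G : R -> R) (a b : R) :
  a <= b -> ex_RInt f a b ->
  (forall t, a <= t <= b -> is_derive G t (g t) /\ continuous g t) ->
  (forall t, a < t < b -> f t <= g t) ->
  RInt f a b <= G b - G a.
Proof.
  intros Hab Hf HG Hfg.
  assert (Hg : is_RInt g a b (minus (G b) (G a))).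
  { apply (is_RInt_derive (V := R_CompleteNormedModule));
      rewrite Rmin_left, Rmax_right by exact Hab; apply HG. }
  apply Rle_trans with (RInt g a b).
  - apply RInt_le; auto. now exists (minus (G b) (G a)).
  - now rewrite (is_RInt_unique _ _ _ _ Hg).
Qed.

Lemma is_RInt_gen_at_point_r {Fa} {FFa : Filter Fa} (f : R -> R) (b L : R) :
  Fa (fun a => ex_RInt f a b) -> filterlim (fun a => RInt f a b) Fa (locally L) ->
  is_RInt_gen f Fa (at_point b) L.
Proof.
  intros Hex Hlim.
  apply filterlimi_lim_ext_loc with (f := fun ab => RInt f (fst ab) (snd ab)).
  - exists (fun a => ex_RInt f a b) (fun y => y = b); [exact Hex | reflexivity |].
    intros a y Ha ->; now apply (RInt_correct (V := R_CompleteNormedModule)).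
  - intros P HP; exists (fun a => P (RInt f a b)) (fun y => y = b); [now apply Hlim | reflexivity |].
    intros a y Ha ->; exact Ha.
Qed.

Lemma is_RInt_gen_at_point_l {Fb} {FFb : Filter Fb} (f : R -> R) (a L : R) :
  Fb (fun b => ex_RInt f a b) -> filterlim (fun b => RInt f a b) Fb (locally L) ->
  is_RInt_gen f (at_point a) Fb L.
Proof.
  intros Hex Hlim.
  apply filterlimi_lim_ext_loc with (f := fun ab => RInt f (fst ab) (snd ab)).
  - exists (fun y => y = a) (fun b => ex_RInt f a b); [reflexivity | exact Hex |].
    intros y b -> Hb; now apply (RInt_correct (V := R_CompleteNormedModule)).
  - intros P HP; exists (fun y => y = a) (fun b => P (RInt f a b)); [reflexivity | now apply Hlim |].
    intros y b -> Hb; exact Hb.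
Qed.

Section NonnegativeImproperIntegral.

Variable f : R -> R.
Hypothesis f_ge_0 : forall t, 0 < t -> 0 <= f t.
Hypothesis f_ex_RInt : forall a b, 0 < a -> 0 < b -> ex_RInt f a b.

Lemma RInt_pos_ge_0 (a b : R) : 0 < a <= b -> 0 <= RInt f a b.
Proof.
  intros Hab; apply RInt_ge_0; [lra | apply f_ex_RInt; lra |].
  intros t Ht; apply f_ge_0; lra.
Qed.

Lemma RInt_le_extend_l (a b c : R) : 0 < a <= b -> b <= c -> RInt f b c <= RInt f a c.
Proof.
  intros Hab Hbc.
  rewrite <- (RInt_Chasles f a b c) by (apply f_ex_RInt; lra).
  pose proof (RInt_pos_ge_0 a b Hab); unfold plus; simpl; lra.
Qed.

Lemma RInt_le_extend_r (a b c : R) : 0 < a <= b -> b <= c -> RInt f a b <= RInt f a c.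
Proof.
  intros Hab Hbc.
  rewrite <- (RInt_Chasles f a b c) by (apply f_ex_RInt; lra).
  pose proof (RInt_pos_ge_0 b c ltac:(lra)); unfold plus; simpl; lra.
Qed.

Lemma is_RInt_gen_0_pinfty_of_bounded (B0 B1 : R) :
  (forall a, 0 < a <= 1 -> RInt f a 1 <= B0) ->
  (forall b, 1 <= b -> RInt f 1 b <= B1) ->
  exists L, is_RInt_gen f (at_right 0) (Rbar_locally p_infty) L /\ RInt f 1 2 <= L.
Proof.
  intros HB0 HB1.
  (* The limit at [0+] is turned into one at [+oo] through [a = / s]. *)
  assert (Hinv : forall s, 1 <= s -> 0 < / s <= 1).
  { intros s Hs; split; [apply Rinv_0_lt_compat; lra |].
    rewrite <- Rinv_1; apply Rinv_le_contravar; lra. }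
  destruct (increasing_bounded_cvg_pinfty (fun s => RInt f (/ s) 1) B0) as [L0 [HL0 HL0le]].
  { intros s s' Hs; apply RInt_le_extend_l; [| apply Hinv; lra].
    split; [apply Hinv; lra | apply Rinv_le_contravar; lra]. }
  { intros s Hs; apply HB0, Hinv, Hs. }
  destruct (increasing_bounded_cvg_pinfty (fun b => RInt f 1 b) B1) as [L1 [HL1 HL1le]].
  { intros b b' Hb; apply RInt_le_extend_r; lra. }
  { exact HB1. }
  exists (L0 + L1); split.
  - apply (is_RInt_gen_Chasles f 1 L0 L1).
    + apply is_RInt_gen_at_point_r.
      * exists (mkposreal 1 Rlt_0_1); intros a _ Ha; apply f_ex_RInt; lra.
      * apply (filterlim_ext_loc (fun a => RInt f (/ / a) 1)).
        -- exists (mkposreal 1 Rlt_0_1); intros a _ Ha; simpl; now rewrite Rinv_inv.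
        -- exact (filterlim_comp _ _ _ _ _ _ _ _ filterlim_Rinv_0_right HL0).
    + apply is_RInt_gen_at_point_l; [| exact HL1].
      exists 0; intros b Hb; apply f_ex_RInt; lra.
  - assert (0 <= L0).
    { specialize (HL0le 1 (Rle_refl 1)); rewrite Rinv_1, RInt_point in HL0le; exact HL0le. }
    specialize (HL1le 2 ltac:(lra)); lra.
Qed.

End NonnegativeImproperIntegral.

Lemma filter_prod_0_pinfty (P : R * R -> Prop) :
  (forall a b, 0 < a < 1 -> 1 < b -> P (a, b)) ->
  filter_prod (at_right 0) (Rbar_locally p_infty) P.
Proof.
  intros HP; exists (fun a => 0 < a < 1) (fun b => 1 < b).
  - exists (mkposreal 1 Rlt_0_1); intros a Ha Ha0.
    apply Rabs_of_ball, Rabs_lt_between in Ha; simpl in Ha; lra.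
  - exists 1; auto.
  - exact HP.
Qed.

Lemma Rmin_pos_le (a b z : R) : 0 < a -> 0 < b -> Rmin a b <= z -> 0 < z.
Proof. intros Ha Hb Hz; apply Rlt_le_trans with (2 := Hz); now apply Rmin_glb_lt. Qed.

Lemma is_RInt_gen_le_0_pinfty (f g : R -> R) (lf lg : R) :
  (forall t, 0 < t -> 0 <= f t <= g t) ->
  is_RInt_gen f (at_right 0) (Rbar_locally p_infty) lf ->
  is_RInt_gen g (at_right 0) (Rbar_locally p_infty) lg -> lf <= lg.
Proof.
  intros Hfg Hf Hg; apply Rle_trans with (1 := Rle_abs lf).
  apply (RInt_gen_norm (V := R_CompleteNormedModule) (Fa := at_right 0)
    (Fb := Rbar_locally p_infty) f g lf lg); [| | exact Hf | exact Hg].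
  - apply filter_prod_0_pinfty; intros a b Ha Hb; simpl; lra.
  - apply filter_prod_0_pinfty; intros a b Ha Hb t Ht; simpl in Ht.
    specialize (Hfg t ltac:(lra)); apply Rle_trans with (2 := proj2 Hfg).
    right; apply Rabs_pos_eq, Hfg.
Qed.

Definition gamma_integrand (x t : R) : R := Rpower t (x - 1) * exp (- t).

Lemma gamma_integrand_gt_0 (x t : R) : 0 < gamma_integrand x t.
Proof. apply Rmult_lt_0_compat; [apply Rpower_gt_0 | apply exp_pos]. Qed.

Lemma is_derive_gamma_integrand (x t : R) : 0 < t ->
  is_derive (gamma_integrand (x + 1)) t (x * gamma_integrand x t - gamma_integrand (x + 1) t).
Proof.
  intros Ht; unfold gamma_integrand; replace (x + 1 - 1) with x by ring.
  assert (Hexp : is_derive (fun s => exp (- s)) t (- exp (- t))) by (auto_derive; [exact I | ring]).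
  pose proof (is_derive_mult _ _ t _ _ (is_derive_Rpower t x Ht) Hexp Rmult_comm) as H.
  replace (x * _ - _) with (plus (mult (x * Rpower t (x - 1)) (exp (- t)))
    (mult (Rpower t x) (- exp (- t)))) by (unfold plus, mult; simpl; ring).
  exact H.
Qed.

Lemma gamma_integrand_le_Rpower (x t : R) : 0 < t -> gamma_integrand x t <= Rpower t (x - 1).
Proof.
  intros Ht; unfold gamma_integrand; rewrite <- (Rmult_1_r (Rpower t (x - 1))) at 2.
  apply Rmult_le_compat_l; [left; apply Rpower_gt_0 |].
  rewrite <- exp_0; left; apply exp_increasing; lra.
Qed.

Lemma gamma_integrand_continuous (x t : R) : 0 < t -> continuous (gamma_integrand x) t.
Proof.
  intros Ht; apply (ex_derive_continuous (gamma_integrand x)).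
  replace x with (x - 1 + 1) by ring; eexists; now apply is_derive_gamma_integrand.
Qed.

Lemma ex_RInt_gamma_integrand (x a b : R) : 0 < a -> 0 < b -> ex_RInt (gamma_integrand x) a b.
Proof.
  intros Ha Hb; apply (ex_RInt_continuous (V := R_CompleteNormedModule)).
  intros t [Ht _]; apply gamma_integrand_continuous.
  apply Rlt_le_trans with (2 := Ht); now apply Rmin_glb_lt.
Qed.

Lemma pow_div_le_exp (t : R) (n : nat) : 0 <= t -> (t / INR (S n)) ^ S n <= exp t.
Proof.
  intros Ht; pose proof (lt_0_INR (S n) (Nat.lt_0_succ n)) as Hn.
  assert (Hexp : exp t = exp (t / INR (S n)) ^ S n).
  { rewrite <- Rpower_pow by apply exp_pos; unfold Rpower; rewrite ln_exp.
    f_equal; field; lra. }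
  rewrite Hexp; apply pow_incr; split.
  - apply Rdiv_le_0_compat; lra.
  - pose proof (exp_ineq1_le (t / INR (S n))); lra.
Qed.

Lemma gamma_integrand_le_div_sqr (x : R) (k : nat) (t : R) :
  x - 1 <= INR k -> 1 <= t -> gamma_integrand x t <= INR (S (S k)) ^ S (S k) / t ^ 2.
Proof.
  intros Hk Ht; set (n := S (S k)).
  assert (Hn : 0 < INR n) by (apply lt_0_INR; unfold n; lia).
  assert (Hpow : Rpower t (x - 1) <= t ^ k) by (rewrite <- Rpower_pow by lra; apply Rle_Rpower; lra).
  assert (Hexp : (t / INR n) ^ n <= exp t) by (apply pow_div_le_exp; lra).
  assert (Htn : 0 < (t / INR n) ^ n) by (apply pow_lt, Rdiv_lt_0_compat; lra).
  unfold gamma_integrand; rewrite exp_Ropp.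
  apply Rle_trans with (t ^ k * / (t / INR n) ^ n).
  - apply Rmult_le_compat; [left; apply Rpower_gt_0 | left; apply Rinv_0_lt_compat, exp_pos
      | exact Hpow | apply Rinv_le_contravar; assumption].
  - right; unfold Rdiv; rewrite Rpow_mult_distr, pow_inv.
    replace (t ^ n) with (t ^ k * t ^ 2) by (rewrite <- pow_add; f_equal; unfold n; lia).
    field; repeat split; try apply pow_nonzero; lra.
Qed.

Lemma RInt_gamma_integrand_le_inv (x a : R) : 0 < x -> 0 < a <= 1 ->
  RInt (gamma_integrand x) a 1 <= / x.
Proof.
  intros Hx Ha.
  apply Rle_trans with ((fun t => Rpower t x / x) 1 - (fun t => Rpower t x / x) a).
  - apply (RInt_le_antiderivative _ (fun t => Rpower t (x - 1)) (fun t => Rpower t x / x)); [lra |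
      apply ex_RInt_gamma_integrand; lra | |].
    + intros t Ht; split.
      * replace (Rpower t (x - 1)) with (/ x * (x * Rpower t (x - 1))) by (field; lra).
        apply (is_derive_ext (fun s => / x * Rpower s x)); [intros s; apply Rmult_comm |].
        apply is_derive_scal, is_derive_Rpower; lra.
      * apply (ex_derive_continuous (fun s => Rpower s (x - 1))).
        eexists; apply is_derive_Rpower; lra.
    + intros t Ht; apply gamma_integrand_le_Rpower; lra.
  - cbv beta; unfold Rpower at 1; rewrite ln_1, Rmult_0_r, exp_0.
    pose proof (Rpower_gt_0 a x); pose proof (Rinv_0_lt_compat x Hx).
    unfold Rdiv; nra.
Qed.

Lemma RInt_gamma_integrand_le_from_1 (x : R) (k : nat) (b : R) : x - 1 <= INR k -> 1 <= b ->
  RInt (gamma_integrand x) 1 b <= INR (S (S k)) ^ S (S k).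
Proof.
  intros Hk Hb; set (C := INR (S (S k)) ^ S (S k)).
  assert (HC : 0 < C) by (apply pow_lt, lt_0_INR; lia).
  apply Rle_trans with ((fun t => - C / t) b - (fun t => - C / t) 1).
  - apply (RInt_le_antiderivative _ (fun t => C / t ^ 2) (fun t => - C / t)); [lra |
      apply ex_RInt_gamma_integrand; lra | |].
    + intros t Ht; split.
      * auto_derive; [lra | field; lra].
      * apply (ex_derive_continuous (fun s => C / s ^ 2)); auto_derive; nra.
    + intros t Ht; apply gamma_integrand_le_div_sqr; lra.
  - simpl; assert (0 < C / b) by (apply Rdiv_lt_0_compat; lra).
    unfold Rdiv at 1; lra.
Qed.

Lemma gamma_integral_exists (x : R) : 0 < x ->
  exists L, is_RInt_gen (gamma_integrand x) (at_right 0) (Rbar_locally p_infty) L /\ 0 < L.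
Proof.
  intros Hx; destruct (nat_above (x - 1)) as [k Hk].
  destruct (is_RInt_gen_0_pinfty_of_bounded (gamma_integrand x)
    (fun t _ => Rlt_le _ _ (gamma_integrand_gt_0 x t)) (ex_RInt_gamma_integrand x)
    (/ x) (INR (S (S k)) ^ S (S k))) as [L [HL HL12]].
  - intros a Ha; now apply RInt_gamma_integrand_le_inv.
  - intros b Hb; now apply RInt_gamma_integrand_le_from_1.
  - exists L; split; [exact HL |].
    apply Rlt_le_trans with (2 := HL12), RInt_gt_0; [lra | |].
    + intros t _; apply gamma_integrand_gt_0.
    + intros t Ht; apply gamma_integrand_continuous; lra.
Qed.

Lemma Gamma_correct (x : R) : 0 < x ->
  is_RInt_gen (gamma_integrand x) (at_right 0) (Rbar_locally p_infty) (Gamma x).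
Proof.
  intros Hx; destruct (gamma_integral_exists x Hx) as [L [HL _]].
  replace (Gamma x) with L; [exact HL |].
  symmetry; exact (is_RInt_gen_unique (V := R_CompleteNormedModule) _ _ HL).
Qed.

Lemma Gamma_gt_0 (x : R) : 0 < x -> 0 < Gamma x.
Proof.
  intros Hx; destruct (gamma_integral_exists x Hx) as [L [HL HLpos]].
  replace (Gamma x) with L; [exact HLpos |].
  symmetry; exact (is_RInt_gen_unique (V := R_CompleteNormedModule) _ _ HL).
Qed.

Lemma filterlim_gamma_integrand_0_right (x : R) : 0 < x ->
  filterlim (gamma_integrand (x + 1)) (at_right 0) (locally 0).
Proof.
  intros Hx; apply (filterlim_0_le _ (fun t => Rpower t x)); [| now apply filterlim_Rpower_0_right].
  exists (mkposreal 1 Rlt_0_1); intros t _ Ht; split; [left; apply gamma_integrand_gt_0 |].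
  replace x with (x + 1 - 1) at 2 by ring; apply gamma_integrand_le_Rpower; lra.
Qed.

Lemma filterlim_gamma_integrand_pinfty (x : R) :
  filterlim (gamma_integrand x) (Rbar_locally p_infty) (locally 0).
Proof.
  destruct (nat_above (x - 1)) as [k Hk]; set (C := INR (S (S k)) ^ S (S k)).
  apply (filterlim_0_le _ (fun t => C / t)); [| apply filterlim_div_pinfty].
  exists 1; intros t Ht; split; [left; apply gamma_integrand_gt_0 |].
  apply Rle_trans with (1 := gamma_integrand_le_div_sqr x k t Hk ltac:(lra)).
  assert (HC : 0 < C) by (apply pow_lt, lt_0_INR; lia).
  unfold Rdiv; apply Rmult_le_compat_l; [lra |].
  apply Rinv_le_contravar; [lra | nra].
Qed.

Lemma is_RInt_gen_gamma_integrand_by_parts (x : R) : 0 < x ->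
  is_RInt_gen (fun t => x * gamma_integrand x t - gamma_integrand (x + 1) t)
    (at_right 0) (Rbar_locally p_infty) 0.
Proof.
  intros Hx; set (dh := fun t => x * gamma_integrand x t - gamma_integrand (x + 1) t).
  assert (Hdh : forall a b z, 0 < a -> 0 < b -> Rmin a b <= z ->
    is_derive (gamma_integrand (x + 1)) z (dh z)).
  { intros a b z Ha Hb Hz; apply is_derive_gamma_integrand, (Rmin_pos_le a b); auto. }
  apply (is_RInt_gen_ext (Derive (gamma_integrand (x + 1)))).
  { apply filter_prod_0_pinfty; intros a b Ha Hb z [Hz _]; simpl in *.
    apply is_derive_unique, (Hdh a b); lra. }
  enough (H : is_RInt_gen (Derive (gamma_integrand (x + 1)))
    (at_right 0) (Rbar_locally p_infty) (0 - 0)) by now rewrite Rminus_0_r in H.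
  apply is_RInt_gen_Derive.
  - apply filter_prod_0_pinfty; intros a b Ha Hb z [Hz _]; simpl in *.
    exists (dh z); apply (Hdh a b); lra.
  - apply filter_prod_0_pinfty; intros a b Ha Hb z [Hz _]; simpl in *.
    assert (Hz0 : 0 < z) by (apply (Rmin_pos_le a b); lra).
    apply (continuous_ext_loc _ dh).
    + exists (mkposreal z Hz0); intros y Hy.
      apply Rabs_of_ball, Rabs_lt_between in Hy; simpl in Hy.
      symmetry; apply is_derive_unique, is_derive_gamma_integrand; lra.
    + apply (continuous_minus (fun t => x * gamma_integrand x t)).
      * apply (continuous_scal_r x (gamma_integrand x)), gamma_integrand_continuous, Hz0.
      * apply gamma_integrand_continuous, Hz0.
  - now apply filterlim_gamma_integrand_0_right.
  - apply filterlim_gamma_integrand_pinfty.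
Qed.

Lemma Gamma_succ (x : R) : 0 < x -> Gamma (x + 1) = x * Gamma x.
Proof.
  intros Hx.
  pose proof (is_RInt_gen_gamma_integrand_by_parts x Hx) as HD.
  pose proof (is_RInt_gen_minus _ _ _ _
    (is_RInt_gen_scal _ x _ (Gamma_correct x Hx)) (Gamma_correct (x + 1) ltac:(lra))) as HM.
  apply (is_RInt_gen_unique (V := R_CompleteNormedModule)) in HD, HM.
  pose proof (eq_trans (eq_sym HD) HM) as E.
  unfold minus, plus, opp, scal in E; simpl in E; unfold mult in E; simpl in E; lra.
Qed.

(* AM-GM between [sqrt x * t^(x-1)] and [t^x / sqrt x], whose geometric mean is [t^(x-1/2)] *)
Lemma gamma_integrand_half_le (x t : R) : 0 < x -> 0 < t ->
  gamma_integrand (x + / 2) t <=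
    sqrt x / 2 * gamma_integrand x t + / (2 * sqrt x) * gamma_integrand (x + 1) t.
Proof.
  intros Hx Ht; unfold gamma_integrand.
  set (s := Rpower t (/ 2)); set (A := Rpower t (x - 1)); set (e := exp (- t)).
  replace (Rpower t (x + / 2 - 1)) with (A * s) by (unfold A, s; rewrite <- Rpower_plus; f_equal; ring).
  replace (Rpower t (x + 1 - 1)) with (A * (s * s))
    by (unfold A, s; rewrite <- !Rpower_plus; f_equal; field).
  assert (HA : 0 < A) by apply Rpower_gt_0; assert (He : 0 < e) by apply exp_pos.
  assert (Hl : 0 < sqrt x) by (apply sqrt_lt_R0; lra); set (l := sqrt x) in *.
  assert (0 <= A * e * (l - s) ^ 2 / (2 * l)).
  { apply Rdiv_le_0_compat; [apply Rmult_le_pos; [nra | apply pow2_ge_0] | lra]. }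
  apply Rminus_le.
  replace (A * s * e - (l / 2 * (A * e) + / (2 * l) * (A * (s * s) * e)))
    with (- (A * e * (l - s) ^ 2 / (2 * l))) by (field; lra).
  lra.
Qed.

Lemma Gamma_half_sqr_le (x : R) : 0 < x -> Gamma (x + / 2) ^ 2 <= x * Gamma x ^ 2.
Proof.
  intros Hx; pose proof (Gamma_gt_0 x Hx) as HG.
  assert (Hl : 0 < sqrt x) by (apply sqrt_lt_R0; lra).
  assert (Hhalf : Gamma (x + / 2) <= sqrt x * Gamma x).
  { apply Rle_trans with (sqrt x / 2 * Gamma x + / (2 * sqrt x) * Gamma (x + 1)).
    - apply (is_RInt_gen_le_0_pinfty (gamma_integrand (x + / 2))
        (fun t => sqrt x / 2 * gamma_integrand x t + / (2 * sqrt x) * gamma_integrand (x + 1) t)).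
      + intros t Ht; split; [left; apply gamma_integrand_gt_0 | now apply gamma_integrand_half_le].
      + apply Gamma_correct; lra.
      + pose proof (Gamma_correct x Hx) as H0.
        pose proof (Gamma_correct (x + 1) ltac:(lra)) as H1.
        exact (is_RInt_gen_plus _ _ _ _ (is_RInt_gen_scal _ (sqrt x / 2) _ H0)
          (is_RInt_gen_scal _ (/ (2 * sqrt x)) _ H1)).
    - rewrite Gamma_succ by exact Hx.
      replace (x * Gamma x) with (sqrt x * sqrt x * Gamma x) by (rewrite sqrt_sqrt; lra).
      right; field; lra. }
  assert (HG2 : 0 < Gamma (x + / 2)) by (apply Gamma_gt_0; lra).
  replace (x * Gamma x ^ 2) with ((sqrt x * Gamma x) ^ 2)
    by (rewrite Rpow_mult_distr, pow2_sqrt; lra).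
  apply pow_incr; lra.
Qed.

Fixpoint rising (x : R) (n : nat) : R :=
  match n with
  | O => 1
  | S n => rising x n * (x + INR n)
  end.

Lemma rising_gt_0 (x : R) (n : nat) : 0 < x -> 0 < rising x n.
Proof.
  intros Hx; induction n as [| n IH]; simpl; [lra |].
  apply Rmult_lt_0_compat; [exact IH | pose proof (pos_INR n); lra].
Qed.

Lemma Gamma_add_nat (x : R) (n : nat) : 0 < x -> Gamma (x + INR n) = Gamma x * rising x n.
Proof.
  intros Hx; induction n as [| n IH]; cbn [rising]; [simpl; rewrite Rplus_0_r; ring |].
  rewrite S_INR, <- Rplus_assoc, Gamma_succ, IH by (pose proof (pos_INR n); lra); ring.
Qed.

Fixpoint wallis (a b : nat -> R) (u0 u1 : R) (n : nat) : R :=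
  match n with
  | O => u0
  | S O => u1
  | S (S k as n') => a n' * wallis a b u0 u1 n' + b k * wallis a b u0 u1 k
  end.

Lemma wallis_SS (a b : nat -> R) (u0 u1 : R) (n : nat) :
  wallis a b u0 u1 (S (S n)) = a (S n) * wallis a b u0 u1 (S n) + b n * wallis a b u0 u1 n.
Proof. reflexivity. Qed.

(* Indices are shifted by one from the classical A_n, B_n (A_(-1) = 1, B_(-1) = 0). *)
Definition cf_num (a b : nat -> R) : nat -> R := wallis a b 1 (a 0%nat).
Definition cf_den (a b : nat -> R) : nat -> R := wallis a b 0 1.

Fixpoint cf_tail_with (a b : nat -> R) (k m : nat) (x : R) : R :=
  match m with
  | O => x
  | S m' => a k + b k / cf_tail_with a b (S k) m' x
  end.

Lemma cf_tail_eq_with (a b : nat -> R) (m k : nat) :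
  cf_tail a b k m = cf_tail_with a b k m (a (k + m)%nat).
Proof.
  revert k; induction m as [| m IH]; intros k; simpl; [now rewrite Nat.add_0_r |].
  now rewrite IH, Nat.add_succ_r.
Qed.

Lemma cf_tail_with_S (a b : nat -> R) (m k : nat) (x : R) :
  cf_tail_with a b k (S m) x = cf_tail_with a b k m (a (k + m)%nat + b (k + m)%nat / x).
Proof.
  revert k; induction m as [| m IH]; intros k; [simpl; now rewrite Nat.add_0_r |].
  change (a k + b k / cf_tail_with a b (S k) (S m) x =
    a k + b k / cf_tail_with a b (S k) m (a (k + S m)%nat + b (k + S m)%nat / x)).
  now rewrite IH, Nat.add_succ_r.
Qed.

Section Convergents.

Variables a b : nat -> R.
Hypothesis a_pos : forall n, 0 < a (S n).
Hypothesis b_pos : forall n, 0 < b (S n).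

Lemma cf_den_pos (n : nat) : 0 < cf_den a b (S n).
Proof.
  enough (H : 0 < cf_den a b (S n) /\ 0 < cf_den a b (S (S n))) by apply H.
  induction n as [| n [IH1 IH2]].
  - unfold cf_den; rewrite wallis_SS; simpl; pose proof (a_pos 0); lra.
  - split; [exact IH2 |]; unfold cf_den in *; rewrite wallis_SS.
    pose proof (a_pos (S n)); pose proof (b_pos n); nra.
Qed.

Lemma b_cf_den_ge_0 (n : nat) : 0 <= b n * cf_den a b n.
Proof.
  destruct n as [| n]; [unfold cf_den; simpl; lra |].
  apply Rmult_le_pos; left; [apply b_pos | apply cf_den_pos].
Qed.

Lemma cf_tail_with_wallis (n : nat) (x : R) : 0 < x ->
  cf_tail_with a b 0 (S n) x =
    (x * cf_num a b (S n) + b n * cf_num a b n) / (x * cf_den a b (S n) + b n * cf_den a b n).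
Proof.
  revert x; induction n as [| n IH]; intros x Hx.
  - unfold cf_num, cf_den; simpl; field; lra.
  - rewrite cf_tail_with_S; simpl (0 + S n)%nat.
    set (y := a (S n) + b (S n) / x).
    assert (Hy : 0 < y).
    { pose proof (a_pos n); pose proof (Rdiv_lt_0_compat _ _ (b_pos n) Hx); unfold y; lra. }
    rewrite IH by exact Hy.
    pose proof (cf_den_pos n); pose proof (b_cf_den_ge_0 n); pose proof (a_pos n); pose proof (b_pos n).
    unfold cf_num, cf_den in *; rewrite !wallis_SS.
    assert (0 < a (S n) * wallis a b 0 1 (S n) + b n * wallis a b 0 1 n) by nra.
    unfold y; field; split; [apply Rgt_not_eq; nra | lra].
Qed.

Lemma cf_approx_eq_num_den (n : nat) : cf_approx a b n = cf_num a b (S n) / cf_den a b (S n).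
Proof.
  unfold cf_approx; rewrite cf_tail_eq_with.
  destruct n as [| n]; [unfold cf_num, cf_den; simpl; field |].
  rewrite cf_tail_with_wallis by apply a_pos.
  unfold cf_num, cf_den; now rewrite !wallis_SS.
Qed.

End Convergents.

Definition rho : R := Gamma (1 / 4) / Gamma (3 / 4).

Lemma rho_gt_0 : 0 < rho.
Proof. apply Rdiv_lt_0_compat; apply Gamma_gt_0; lra. Qed.

(* [prod4 r m = r (r + 4) (r + 8) ... (r + 4 (m - 1))] *)
Definition prod4 (r : R) (m : nat) : R := 4 ^ m * rising (r / 4) m.

Lemma prod4_S (r : R) (m : nat) : prod4 r (S m) = prod4 r m * (4 * INR m + r).
Proof. unfold prod4; cbn [rising pow]; field. Qed.

Lemma prod4_gt_0 (r : R) (m : nat) : 0 < r -> 0 < prod4 r m.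
Proof. intros Hr; apply Rmult_lt_0_compat; [apply pow_lt | apply rising_gt_0]; lra. Qed.

Definition gamma_ratio (m : nat) : R := Gamma (INR m + 3 / 4) / Gamma (INR m + 1 / 4).

Lemma prod4_3_eq (m : nat) : prod4 3 m = rho * gamma_ratio m * prod4 1 m.
Proof.
  unfold prod4, rho, gamma_ratio.
  rewrite !(Rplus_comm (INR m)), !Gamma_add_nat by lra.
  pose proof (Gamma_gt_0 (1 / 4)); pose proof (Gamma_gt_0 (3 / 4));
  pose proof (rising_gt_0 (1 / 4) m).
  field; repeat split; lra.
Qed.

Lemma gamma_ratio_bounds (m : nat) :
  (4 * INR m + 1) ^ 2 <= (4 * INR m + 3) * (4 * gamma_ratio m ^ 2) /\
  4 * gamma_ratio m ^ 2 <= 4 * INR m + 1.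
Proof.
  pose proof (pos_INR m) as Hm.
  pose proof (Gamma_gt_0 (INR m + 1 / 4) ltac:(lra)) as G1.
  pose proof (Gamma_gt_0 (INR m + 3 / 4) ltac:(lra)) as G3.
  pose proof (Gamma_half_sqr_le (INR m + 1 / 4) ltac:(lra)) as Hup.
  pose proof (Gamma_half_sqr_le (INR m + 3 / 4) ltac:(lra)) as Hlow.
  replace (INR m + 1 / 4 + / 2) with (INR m + 3 / 4) in Hup by field.
  replace (INR m + 3 / 4 + / 2) with (INR m + 1 / 4 + 1) in Hlow by field.
  rewrite Gamma_succ in Hlow by lra.
  set (g := Gamma (INR m + 1 / 4)) in *.
  replace (Gamma (INR m + 3 / 4)) with (gamma_ratio m * g) in Hup, Hlow
    by (unfold gamma_ratio; fold g; field; lra).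
  rewrite !Rpow_mult_distr in Hup, Hlow.
  assert (Hg : 0 < g ^ 2) by (apply pow_lt; lra).
  split; apply Rmult_le_reg_r with (g ^ 2); nra.
Qed.

Lemma even_convergent_ratio_error (N s : R) : 1 <= N -> N ^ 2 <= (N + 2) * s -> s <= N ->
  Rabs (((N + 1) ^ 2 + 1) * s ^ 2 / N ^ 4 - 1) <= 4 / N.
Proof.
  intros HN Hlo Hhi.
  assert (Hs : 0 < s) by nra.
  apply Rabs_div_sub_1_le; [apply pow_lt; lra |].
  replace (4 / N * N ^ 4) with (4 * N ^ 3) by (field; lra).
  assert (Hs2 : N ^ 4 <= (N + 2) ^ 2 * s ^ 2) by nra.
  assert (Hs2' : s ^ 2 <= N ^ 2) by nra.
  apply Rabs_le; split; nra.
Qed.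

Lemma odd_convergent_ratio_error (N s : R) : 2 <= N -> N ^ 2 <= (N + 2) * s -> s <= N ->
  Rabs (s ^ 2 / ((N - 1) ^ 2 + 1) - 1) <= 4 / (N - 1).
Proof.
  intros HN Hlo Hhi.
  assert (Hs : 0 < s) by nra.
  apply Rabs_div_sub_1_le; [nra |].
  replace (4 / (N - 1) * ((N - 1) ^ 2 + 1)) with (4 * (N - 1) + 4 / (N - 1)) by (field; lra).
  assert (Hs2 : N ^ 4 <= (N + 2) ^ 2 * s ^ 2) by nra.
  assert (Hs2' : s ^ 2 <= N ^ 2) by nra.
  assert (0 < 4 / (N - 1)) by (apply Rdiv_lt_0_compat; lra).
  assert (Hpoly : (N ^ 2 - 6 * N + 6) * (N + 2) ^ 2 <= N ^ 4) by nra.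
  assert (Hlow : N ^ 2 - 6 * N + 6 <= s ^ 2).
  { apply Rmult_le_reg_r with ((N + 2) ^ 2); [nra | lra]. }
  apply Rabs_le; split; nra.
Qed.

Lemma cf_a_SS (n : nat) : cf_a (S (S n)) = 16 * (INR n + 2).
Proof. change (16 * INR (S (S n)) = 16 * (INR n + 2)); rewrite !S_INR; ring. Qed.

Lemma cf_b_S (n : nat) : cf_b (S n) = (2 * INR n + 3) ^ 4.
Proof. change ((2 * INR (S n) + 1) ^ 4 = (2 * INR n + 3) ^ 4); rewrite S_INR; ring. Qed.

Lemma cf_num_closed (m : nat) :
  cf_num cf_a cf_b (S (2 * m)) = 16 * prod4 3 m ^ 4 * ((4 * INR m + 2) ^ 2 + 1) /\
  cf_num cf_a cf_b (S (S (2 * m))) = 16 * prod4 3 (S m) ^ 4.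
Proof.
  unfold cf_num; induction m as [| m [IH1 IH2]].
  - rewrite prod4_S; unfold prod4; simpl; split; field.
  - assert (E1 : wallis cf_a cf_b 1 (cf_a 0) (S (2 * S m)) =
                 16 * prod4 3 (S m) ^ 4 * ((4 * INR (S m) + 2) ^ 2 + 1)).
    { replace (S (2 * S m)) with (S (S (S (2 * m)))) by lia.
      rewrite wallis_SS, IH1, IH2, cf_a_SS, cf_b_S, prod4_S, !S_INR, mult_INR; simpl (INR 2); ring. }
    split; [exact E1 |].
    replace (S (S (2 * S m))) with (S (S (S (S (2 * m))))) by lia.
    rewrite wallis_SS, cf_a_SS, cf_b_S.
    replace (S (S (S (2 * m)))) with (S (2 * S m)) by lia.
    rewrite E1, IH2, !prod4_S, !S_INR, mult_INR; simpl (INR 2); ring.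
Qed.

Lemma cf_den_closed (m : nat) :
  cf_den cf_a cf_b (S (2 * m)) = prod4 1 (S m) ^ 4 /\
  cf_den cf_a cf_b (S (S (2 * m))) = prod4 1 (S m) ^ 4 * ((4 * INR m + 4) ^ 2 + 1).
Proof.
  unfold cf_den; induction m as [| m [IH1 IH2]].
  - rewrite prod4_S; unfold prod4; simpl; split; field.
  - assert (E1 : wallis cf_a cf_b 0 1 (S (2 * S m)) = prod4 1 (S (S m)) ^ 4).
    { replace (S (2 * S m)) with (S (S (S (2 * m)))) by lia.
      rewrite wallis_SS, IH1, IH2, cf_a_SS, cf_b_S, (prod4_S 1 (S m)), !S_INR, mult_INR;
        simpl (INR 2); ring. }
    split; [exact E1 |].
    replace (S (S (2 * S m))) with (S (S (S (S (2 * m))))) by lia.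
    rewrite wallis_SS, cf_a_SS, cf_b_S.
    replace (S (S (S (2 * m)))) with (S (2 * S m)) by lia.
    rewrite E1, IH2, (prod4_S 1 (S m)), !S_INR, mult_INR; simpl (INR 2); ring.
Qed.

Lemma cf_approx_cf_ab_eq_num_den (n : nat) :
  cf_approx cf_a cf_b n = cf_num cf_a cf_b (S n) / cf_den cf_a cf_b (S n).
Proof.
  apply cf_approx_eq_num_den.
  - intros [| k]; [simpl; lra | rewrite cf_a_SS; pose proof (pos_INR k); lra].
  - intros k; rewrite cf_b_S; apply pow_lt; pose proof (pos_INR k); lra.
Qed.

Lemma cf_approx_even (m : nat) :
  cf_approx cf_a cf_b (2 * m) =
    rho ^ 4 * (((4 * INR m + 2) ^ 2 + 1) * (4 * gamma_ratio m ^ 2) ^ 2 / (4 * INR m + 1) ^ 4).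
Proof.
  rewrite cf_approx_cf_ab_eq_num_den, (proj1 (cf_num_closed m)), (proj1 (cf_den_closed m)).
  rewrite prod4_S, prod4_3_eq.
  pose proof (pos_INR m); pose proof (prod4_gt_0 1 m Rlt_0_1).
  field; lra.
Qed.

Lemma cf_approx_odd (m : nat) :
  cf_approx cf_a cf_b (S (2 * m)) =
    rho ^ 4 * ((4 * gamma_ratio (S m) ^ 2) ^ 2 / ((4 * INR m + 4) ^ 2 + 1)).
Proof.
  rewrite cf_approx_cf_ab_eq_num_den, (proj2 (cf_num_closed m)), (proj2 (cf_den_closed m)).
  rewrite prod4_3_eq.
  pose proof (prod4_gt_0 1 (S m) Rlt_0_1).
  assert (0 < (4 * INR m + 4) ^ 2 + 1) by (pose proof (pow2_ge_0 (4 * INR m + 4)); lra).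
  field; lra.
Qed.

Lemma cf_approx_error (n : nat) :
  Rabs (cf_approx cf_a cf_b n - rho ^ 4) <= 4 * rho ^ 4 / (INR n + 1).
Proof.
  assert (Hr : 0 < rho ^ 4) by (apply pow_lt, rho_gt_0).
  assert (Hscale : forall X e, Rabs (X - 1) <= e -> Rabs (rho ^ 4 * X - rho ^ 4) <= rho ^ 4 * e).
  { intros X e H; replace (rho ^ 4 * X - rho ^ 4) with (rho ^ 4 * (X - 1)) by ring.
    rewrite Rabs_mult, (Rabs_pos_eq (rho ^ 4)) by lra; now apply Rmult_le_compat_l; [lra |]. }
  destruct (Nat.Even_or_Odd n) as [[m ->] | [m ->]];
    rewrite ?Nat.add_1_r, ?S_INR, mult_INR; simpl (INR 2); pose proof (pos_INR m).
  - rewrite cf_approx_even.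
    destruct (gamma_ratio_bounds m) as [Hlo Hhi].
    replace (4 * INR m + 2) with (4 * INR m + 1 + 1) by ring.
    eapply Rle_trans; [apply Hscale, even_convergent_ratio_error; [lra | | exact Hhi] |].
    + replace (4 * INR m + 1 + 2) with (4 * INR m + 3) by ring; exact Hlo.
    + unfold Rdiv; rewrite <- Rmult_assoc, (Rmult_comm (rho ^ 4) 4).
      apply Rmult_le_compat_l; [lra | apply Rinv_le_contravar; lra].
  - rewrite cf_approx_odd.
    destruct (gamma_ratio_bounds (S m)) as [Hlo Hhi]; rewrite S_INR in Hlo, Hhi.
    replace (4 * INR m + 4) with (4 * (INR m + 1) + 1 - 1) by ring.
    eapply Rle_trans; [apply Hscale, odd_convergent_ratio_error; [lra | | exact Hhi] |].
    + replace (4 * (INR m + 1) + 1 + 2) with (4 * (INR m + 1) + 3) by ring; exact Hlo.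
    + unfold Rdiv; rewrite <- Rmult_assoc, (Rmult_comm (rho ^ 4) 4).
      apply Rmult_le_compat_l; [lra | apply Rinv_le_contravar; lra].
Qed.

Theorem mainTheorem2 :
  cf_converges_to cf_a cf_b ((Gamma (1/4) / Gamma (3/4)) ^ 4).
Proof. exact (is_lim_seq_of_error_le _ (rho ^ 4) _ cf_approx_error). Qed.
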